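(* Let $G$ be a connected graph with $\delta(G)=1$ and girth at least $15$. If $G\in\mathcal U$, then every vertex $v$ with $d_G(v,S_G)=2$ has exactly one single star support vertex at distance exactly $2$ from $v$.
   Context: All graphs are finite and simple. A set $P\subseteq V(G)$ is an open packing if no two distinct vertices of $P$ have a common neighbor; it is maximal if maximal under inclusion among open packings. $\rho^o(G)$ is the maximum size of an open packing and $\rho^o_L(G)$ the minimum size of a maximal open packing; $\mathcal U$ is the class of graphs with $\rho^o_L(G)=\rho^o(G)$. A leaf is a vertex of degree $1$; a support vertex is a vertex adjacent to at least one leaf; $S_G$ is the set of support vertices and $d_G(v,S_G)=\min_{s\in S_G}d_G(v,s)$. A single star support vertex is a support vertex not adjacent to any other support vertex. *)

(* A simple graph = symmetric irreflexive relation e on a finType T. *)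
From mathcomp Require Import all_boot.
Set Implicit Arguments. Unset Strict Implicit. Unset Printing Implicit Defensive.

Section Graph.
Variables (T : finType) (e : rel T).

Definition nbhd (x : T) : {set T} := [set y | e x y].
Definition deg (x : T) : nat := #|nbhd x|.

Definition open_packing (P : {set T}) : bool :=
  [forall x in P, forall y in P, (x != y) ==> [disjoint nbhd x & nbhd y]].

Definition maximal_open_packing (P : {set T}) : bool :=
  open_packing P &&
  [forall Q : {set T}, (open_packing Q && (P \subset Q)) ==> (Q == P)].

Definition rho_o : nat := \max_(P : {set T} | open_packing P) #|P|.

(* rho^o_L : minimum size of a maximal open packing
   (the empty set is an open packing, so maximal ones exist) *)
Definition rho_oL : nat :=
  \big[minn/#|T|]_(P : {set T} | maximal_open_packing P) #|P|.

Definition in_U : Prop := rho_oL = rho_o.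

Definition leaf (x : T) : bool := deg x == 1.
Definition support (s : T) : bool := [exists y, e s y && leaf y].
Definition single_star_support (s : T) : bool :=
  support s && [forall t, e s t ==> ~~ support t].

Definition min_deg_one : Prop := (forall x, 1 <= deg x) /\ (exists x, deg x = 1).

Definition connected_graph : Prop := forall x y, connect e x y.

Definition girth_at_least (g : nat) : Prop :=
  forall c : seq T, ucycle e c -> 3 <= size c -> g <= size c.

Definition walk_len (x y : T) (k : nat) : Prop :=
  exists p : seq T, [&& path e x p, last x p == y & size p == k].

Definition dist_is (x y : T) (k : nat) : Prop :=
  walk_len x y k /\ forall m, m < k -> ~ walk_len x y m.

Definition dist_to_supports_is (v : T) (k : nat) : Prop :=
  (exists s, support s /\ dist_is v s k) /\
  (forall s, support s -> forall m, m < k -> ~ walk_len v s m).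

End Graph.

From Pilot Require Import Defs.
From mathcomp Require Import all_boot zify.
Set Implicit Arguments. Unset Strict Implicit. Unset Printing Implicit Defensive.

(** As G has no triangles, "at distance 2" means
    "sharing a neighbour" ([dist_is_two]).

    Both halves rest on one exchange argument ([exchange]): if x lies in a maximal
    open packing P and y, z share neighbours with x but not with each other nor
    with the rest of P, then (P :\ x) :|: [set y; z] is a larger open packing,
    contradicting rho_oL = rho_o. To meet its hypotheses we build, for every vertex
    c of the "shell" of x, y, z (vertices sharing a neighbour with y or z but not
    with x), the end of a non-backtracking walk of length 6 from x through c
    ([far_shell_exchange]). The girth bound makes such walks unique
    ([nobacktrack_walk_unique]), so these ends form an open packing apart from x. *)

Section NonBacktracking.
Variable T : eqType.

Fixpoint nobacktrack (s : seq T) : bool :=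
  match s with
  | a :: ((_ :: c :: _) as s') => (a != c) && nobacktrack s'
  | _ => true
  end.

Definition neq_second (x : T) (s : seq T) : bool :=
  if s is _ :: z :: _ then x != z else true.

Lemma nobacktrack_cons x s : nobacktrack (x :: s) = neq_second x s && nobacktrack s.
Proof. by case: s => [|y [|z s]]. Qed.

Lemma nobacktrack_catr s t : nobacktrack (s ++ t) -> nobacktrack t.
Proof. by elim: s => // x s IH; rewrite cat_cons nobacktrack_cons => /andP[_ /IH]. Qed.

Lemma nobacktrack_catl s t : nobacktrack (s ++ t) -> nobacktrack s.
Proof.
elim: s => // x s IH; rewrite cat_cons !nobacktrack_cons => /andP[Hx /IH ->].
by rewrite andbT; case: s Hx {IH} => [|y [|z s]].
Qed.

Lemma nobacktrack_join s a b y t :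
  nobacktrack (rcons (rcons s a) b) -> nobacktrack [:: b, y & t] -> a != y ->
  nobacktrack (rcons s a ++ [:: b, y & t]).
Proof.
elim: s => [|x s IH]; first by move=> _ Hb Hay; rewrite cat1s nobacktrack_cons Hb andbT.
rewrite !rcons_cons cat_cons nobacktrack_cons => /andP[Hx /IH {}IH] /IH {}IH /IH {}IH.
by rewrite nobacktrack_cons IH andbT; case: s Hx {IH} => [|z [|w s]].
Qed.

Lemma nobacktrack_rev s : nobacktrack s -> nobacktrack (rev s).
Proof.
elim: s => [|x [|y [|z s]] IH] //; rewrite nobacktrack_cons => /andP[/= Hxz /IH].
rewrite !rev_cons -!cats1 -!catA /= => H.
have -> : rev s ++ [:: z; y; x] = rcons (rev s) z ++ [:: y; x] by rewrite cat_rcons.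
by apply: nobacktrack_join; rewrite -?cats1 -?catA // eq_sym.
Qed.

Lemma not_uniq_repeat (s : seq T) :
  ~~ uniq s -> exists p1 y p2 p3, s = p1 ++ y :: p2 ++ y :: p3.
Proof.
elim: s => //= z s IH; rewrite negb_and negbK => /orP [/splitPr [p q] | /IH].
  by exists [::], z, p, q.
by case=> p1 [y [p2 [p3 ->]]]; exists (z :: p1), y, p2, p3.
Qed.

End NonBacktracking.

Section Girth.
Variables (T : finType) (e : rel T).
Hypotheses (e_sym : symmetric e) (e_irr : irreflexive e) (girth : girth_at_least e 15).

(* A closed non-backtracking walk of positive length has length at least 15:
   either it is a cycle, or it contains a strictly shorter closed such walk. *)
Lemma no_short_closed_walk x l :
  path e x l -> last x l = x -> nobacktrack (x :: l) -> 0 < size l < 15 -> False.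
Proof.
have [n] := ubnP (size l); elim: n l x => // n IH l x.
case/lastP: l => // s z; rewrite last_rcons size_rcons ltnS => Hsz Hp Hz; subst z.
move=> Hnb /andP[_ H15].
have [Hu | /not_uniq_repeat [p1 [y [p2 [p3 Es]]]]] := boolP (uniq (x :: s)).
  have Hc : ucycle e (x :: s) by rewrite /ucycle Hu andbT.
  have [H3 | H3] := ltnP (size (x :: s)) 3; last by have := girth Hc H3 => /=; lia.
  case: s Hp Hnb H3 {Hsz H15 Hc Hu} => [|y [|w s]] //=; first by rewrite e_irr.
  by rewrite eqxx.
have Ex : x :: rcons s x = p1 ++ (y :: rcons p2 y) ++ rcons p3 x.
  by rewrite -rcons_cons Es rcons_cat rcons_cons rcons_cat /= cat_rcons.
have Hsub : path e y (rcons p2 y).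
  have : sorted e (x :: rcons s x) := Hp.
  by rewrite Ex => /cat_sorted2 [_ /cat_sorted2 []].
have /(congr1 size) := Es; rewrite /= size_cat /= size_cat /= => Hs.
apply: (IH (rcons p2 y) y); rewrite ?size_rcons ?last_rcons //; try lia.
by move: Hnb; rewrite Ex => /nobacktrack_catr /nobacktrack_catl.
Qed.

(* Two non-backtracking walks from [x] with the same end and total length < 15
   are equal: otherwise, after removing their common final segment, one of them
   followed by the reverse of the other is a short closed non-backtracking walk. *)
Lemma nobacktrack_walk_unique x p p' :
  path e x p -> path e x p' -> nobacktrack (x :: p) -> nobacktrack (x :: p') ->
  last x p = last x p' -> size p + size p' < 15 -> p = p'.
Proof.
have [n] := ubnP (size p + size p'); elim: n p p' => // n IH p p'.
have closed q : path e x q -> last x q = x -> nobacktrack (x :: q) -> 0 < size q < 15 -> False.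
  exact: no_short_closed_walk.
case/lastP: p => [|p0 b]; case/lastP: p' => [|p0' b'] //; rewrite ?last_rcons ?size_rcons.
- move=> _ _ Hp' _ Hn' /= Hl H15; case: (closed _ Hp' _ Hn');
    by rewrite ?last_rcons ?size_rcons //=; lia.
- move=> _ Hp _ Hn _ /= Hl H15; case: (closed _ Hp _ Hn);
    by rewrite ?last_rcons ?size_rcons //=; lia.
move=> Hs Hp Hp' Hn Hn' Hb H15; subst b'.
have [Ha | Ha] := eqVneq (last x p0) (last x p0').
  move: Hp Hp' Hn Hn'; rewrite !rcons_path -!rcons_cons -!cats1.
  move=> /andP[Hp0 _] /andP[Hp0' _] /nobacktrack_catl Hn0 /nobacktrack_catl Hn0'.
  by rewrite (IH p0 p0') //; lia.
exfalso.
have Hr : path e b (rev (x :: p0')).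
  have := rev_path e x (rcons p0' b); rewrite last_rcons belast_rcons => ->.
  by rewrite (@eq_path _ _ e) // => y z; rewrite /= e_sym.
apply: (closed (rcons p0 b ++ rev (x :: p0'))).
- by rewrite cat_path Hp last_rcons Hr.
- by rewrite last_cat last_rcons rev_cons last_rcons.
- rewrite -cat_cons -rcons_cons (lastI x p0) (lastI x p0') rev_rcons cat_rcons.
  apply: nobacktrack_join => //; first by rewrite -(lastI x p0) rcons_cons.
  by rewrite -rev_rcons -rev_rcons -(lastI x p0') rcons_cons; exact: nobacktrack_rev.
- by rewrite size_cat size_rev !size_rcons /=; lia.
Qed.

End Girth.

Section CommonNeighbours.
Variables (T : finType) (e : rel T).
Hypothesis e_sym : symmetric e.

Definition share_nbr (x y : T) : bool := (x != y) && ~~ [disjoint nbhd e x & nbhd e y].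

Definition apart (x y : T) : bool := (x != y) && ~~ share_nbr x y.

Lemma share_nbrP x y : reflect (x != y /\ exists w, e x w /\ e y w) (share_nbr x y).
Proof.
rewrite /share_nbr -setI_eq0; apply: (iffP andP) => -[-> H]; split => //.
  by case/set0Pn: H => w; rewrite !inE => /andP[]; exists w.
by case: H => w [H1 H2]; apply/set0Pn; exists w; rewrite !inE H1 H2.
Qed.

Lemma share_nbr_of x y w : x != y -> e x w -> e y w -> share_nbr x y.
Proof. by move=> Hxy Hx Hy; apply/share_nbrP; split => //; exists w. Qed.

Lemma share_nbr_sym x y : share_nbr x y = share_nbr y x.
Proof. by rewrite /share_nbr eq_sym disjoint_sym. Qed.

Lemma share_nbr_irr x : share_nbr x x = false.
Proof. by rewrite /share_nbr eqxx. Qed.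

Lemma open_packingP (P : {set T}) :
  reflect {in P &, forall a b, ~~ share_nbr a b} (open_packing e P).
Proof.
apply: (iffP forall_inP) => [H a b Ha Hb | H a Ha].
  have /forall_inP/(_ b Hb) := H a Ha.
  by rewrite /share_nbr; case: (a != b) => //= ->.
apply/forall_inP => b Hb; apply/implyP => Hab.
by have := H a b Ha Hb; rewrite /share_nbr Hab negbK.
Qed.

End CommonNeighbours.

Section RootedWalks.
Variables (T : finType) (e : rel T).
Hypotheses (e_sym : symmetric e) (e_irr : irreflexive e) (girth : girth_at_least e 15).
Variable v : T.

Definition nbwalk (p : seq T) : bool := path e v p && nobacktrack (v :: p).

Lemma nbwalk_unique p p' :
  nbwalk p -> nbwalk p' -> last v p = last v p' -> size p + size p' < 15 -> p = p'.
Proof. by move=> /andP[? ?] /andP[? ?]; exact: nobacktrack_walk_unique. Qed.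

Lemma nbwalk_rcons_inv s y : nbwalk (rcons s y) -> nbwalk s.
Proof.
rewrite /nbwalk rcons_path -rcons_cons -cats1 => /andP[/andP[-> _]].
exact: nobacktrack_catl.
Qed.

Lemma nbwalk_rcons s y z :
  nbwalk (rcons s y) -> e y z -> z != last v s -> nbwalk (rcons (rcons s y) z).
Proof.
rewrite /nbwalk rcons_path => /andP[/andP[Hp Hy] Hn] Hz Hne.
rewrite !rcons_path Hp Hy last_rcons Hz -!rcons_cons (lastI v s).
have -> : forall B a, rcons (rcons (rcons B a) y) z = rcons B a ++ [:: y; z].
  by move=> B a; rewrite -!cats1 -!catA.
apply: nobacktrack_join; last by rewrite eq_sym.
  by move: Hn; rewrite -rcons_cons (lastI v s).
by [].
Qed.

(* There are no triangles: a vertex sharing a neighbour with [v] is not adjacent to [v]. *)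
Lemma share_nbr_nonadj c : share_nbr e v c -> ~~ e v c.
Proof.
case/share_nbrP => Hvc [w [Hvw Hcw]]; apply/negP => Hvc'.
have W1 : nbwalk [:: c] by rewrite /nbwalk /= Hvc'.
have W2 : nbwalk [:: w; c] by rewrite /nbwalk /= Hvw e_sym Hcw Hvc.
by have := nbwalk_unique W1 W2 erefl erefl.
Qed.

Lemma nbwalk_step p y : nbwalk p -> e (last v p) y ->
  exists2 p', nbwalk p' & last v p' = y /\ (size p' = (size p).+1 \/ (size p').+1 = size p).
Proof.
case/lastP: p => [_ Hy|s z]; first by exists [:: y]; rewrite /nbwalk /= ?Hy //; split; [|left].
rewrite last_rcons size_rcons => HW Hy; have [Hys | Hys] := eqVneq y (last v s).
  by exists s; [exact: nbwalk_rcons_inv HW | split; last right].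
exists (rcons (rcons s z) y); first exact: nbwalk_rcons.
by rewrite last_rcons !size_rcons; split; last left.
Qed.

Lemma nbwalk_apart_root p : nbwalk p -> 3 <= size p < 13 -> apart e v (last v p).
Proof.
move=> Hp /andP[H3 H13]; apply/andP; split.
  apply/eqP => Ev; have Ep : [::] = p by apply: nbwalk_unique => //=; lia.
  by rewrite -Ep in H3.
apply/share_nbrP => -[_ [q [Hvq Hq]]].
have [p' Hp' [Eq Hs]] := nbwalk_step Hp Hq.
have Hq1 : nbwalk [:: q] by rewrite /nbwalk /= Hvq.
have Ep' : [:: q] = p' by apply: nbwalk_unique => //=; rewrite ?Eq //; lia.
by rewrite -Ep' /= in Hs; lia.
Qed.

Lemma nbwalk_common_nbr p p' q q' a a' b :
  nbwalk (rcons (rcons p q) a) -> nbwalk (rcons (rcons p' q') a') ->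
  size p = size p' -> size p <= 4 -> e a b -> e a' b -> a != a' -> p = p'.
Proof.
move=> H1 H2 Hs H4 Hab Ha'b Haa'.
have H1' := nbwalk_rcons_inv H1; have H2' := nbwalk_rcons_inv H2.
have [Ebq | Hbq] := eqVneq b q; have [Ebq' | Hbq'] := eqVneq b q'.
- subst b q'; have := nbwalk_unique H1' H2'; rewrite !last_rcons !size_rcons.
  by move=> /(_ erefl ltac:(lia)) /rcons_inj [].
- subst b; have H3 : nbwalk (rcons (rcons (rcons p' q') a') q).
    by apply: nbwalk_rcons; rewrite ?last_rcons.
  have := nbwalk_unique H1' H3; rewrite !last_rcons !size_rcons.
  by move=> /(_ erefl ltac:(lia)) /(congr1 size); rewrite !size_rcons; lia.
- subst b; have H3 : nbwalk (rcons (rcons (rcons p q) a) q').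
    by apply: nbwalk_rcons; rewrite ?last_rcons.
  have := nbwalk_unique H3 H2'; rewrite !last_rcons !size_rcons.
  by move=> /(_ erefl ltac:(lia)) /(congr1 size); rewrite !size_rcons; lia.
have H3 : nbwalk (rcons (rcons (rcons p q) a) b).
  by apply: nbwalk_rcons; rewrite ?last_rcons // eq_sym.
have H4' : nbwalk (rcons (rcons (rcons p' q') a') b).
  by apply: nbwalk_rcons; rewrite ?last_rcons // eq_sym.
have := nbwalk_unique H3 H4'; rewrite !last_rcons !size_rcons.
by move=> /(_ erefl ltac:(lia)) /rcons_inj [] /rcons_inj [] _ Eaa'; rewrite Eaa' eqxx in Haa'.
Qed.

End RootedWalks.

Section Exchange.
Variables (T : finType) (e : rel T).

Lemma maximal_extension (B : {set T}) :
  open_packing e B -> exists2 P, maximal_open_packing e P & B \subset P.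
Proof.
move=> HB; have HBB : open_packing e B && (B \subset B) by rewrite HB subxx.
case: (@arg_maxnP _ B (fun Q => open_packing e Q && (B \subset Q)) (fun Q => #|Q|) HBB).
move=> P /andP[HP HBP] Pmax.
exists P => //; rewrite /maximal_open_packing HP /=.
apply/forallP => Q; apply/implyP => /andP[HQ HPQ].
rewrite eq_sym eqEcard HPQ; apply: Pmax.
by rewrite HQ (subset_trans HBP HPQ).
Qed.

Lemma bigmin_le (I : eqType) (r : seq I) (P : pred I) (F : I -> nat) x0 j :
  j \in r -> P j -> \big[minn/x0]_(i <- r | P i) F i <= F j.
Proof.
elim: r => // x r IH; rewrite inE big_cons => /orP [/eqP <- -> | Hj Pj].
  exact: geq_minl.
by case: (P x); [exact: leq_trans (geq_minr _ _) (IH Hj Pj) | exact: IH].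
Qed.

Lemma rho_oL_le P : maximal_open_packing e P -> rho_oL e <= #|P|.
Proof. by move=> HP; apply: bigmin_le; rewrite ?mem_index_enum. Qed.

Lemma rho_o_ge P : open_packing e P -> #|P| <= rho_o e.
Proof. by move=> HP; exact: (@leq_bigmax_cond _ (open_packing e) (fun Q => #|Q|) P HP). Qed.

Definition shell (x y z : T) : {set T} :=
  [set c | (share_nbr e y c || share_nbr e z c) && apart e x c].

(* Extend [x |: A] to a maximal
   open packing [P]; then [(P :\ x) :|: [set y; z]] is a larger open packing,
   so the class U condition [rho_oL = rho_o] fails. *)
Lemma exchange (A : {set T}) x y z :
  in_U e -> open_packing e A -> {in A, forall a, apart e x a} ->
  share_nbr e x y -> share_nbr e x z -> y != z -> ~~ share_nbr e y z ->
  {in shell x y z, forall c, exists2 a, a \in A & share_nbr e a c} -> False.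
Proof.
move=> HU /open_packingP HA Ax Hxy Hxz Hyz Nyz Hshell.
have HB : open_packing e (x |: A).
  apply/open_packingP => a b; rewrite !inE => /predU1P[->|Ha] /predU1P[->|Hb].
  - by rewrite share_nbr_irr.
  - by case/andP: (Ax b Hb).
  - by rewrite share_nbr_sym; case/andP: (Ax a Ha).
  - exact: HA.
have [P HP HBP] := maximal_extension HB.
have /open_packingP HPp : open_packing e P by case/andP: HP.
have xP : x \in P by rewrite (subsetP HBP) // setU11.
have AP a : a \in A -> a \in P by move=> Ha; rewrite (subsetP HBP) // setU1r.
have notinP w : share_nbr e x w -> w \notin P.
  by move=> Hxw; apply/negP => Hw; have := HPp x w xP Hw; rewrite Hxw.
have far w : w \in P -> w != x -> ~~ share_nbr e y w /\ ~~ share_nbr e z w.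
  move=> wP Hwx; apply/andP; rewrite -negb_or; apply/negP => Hw.
  have apx : apart e x w by rewrite /apart eq_sym Hwx HPp.
  have wsh : w \in shell x y z by rewrite inE Hw apx.
  have [a Ha Haw] := Hshell w wsh.
  by have := HPp a w (AP a Ha) wP; rewrite Haw.
set Q := y |: (z |: (P :\ x)).
have HQ : open_packing e Q.
  apply/open_packingP => a b; rewrite !inE.
  move=> /or3P[/eqP->|/eqP->|/andP[Ha Ha']] /or3P[/eqP->|/eqP->|/andP[Hb Hb']];
    rewrite ?share_nbr_irr //.
  - by case: (far b Hb' Hb).
  - by rewrite share_nbr_sym.
  - by case: (far b Hb' Hb).
  - by rewrite share_nbr_sym; case: (far a Ha' Ha).
  - by rewrite share_nbr_sym; case: (far a Ha' Ha).
  - exact: HPp.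
have sizeQ : #|Q| = #|P|.+1.
  have yQ : y \notin z |: (P :\ x) by rewrite !inE negb_or Hyz (negbTE (notinP y Hxy)) andbF.
  have zQ : z \notin P :\ x by rewrite !inE (negbTE (notinP z Hxz)) andbF.
  by rewrite /Q (cardsU1 y) yQ (cardsU1 z) zQ (cardsD1 x P) xP.
have : #|Q| <= #|P| by rewrite (leq_trans (rho_o_ge HQ)) // -[rho_o e]HU rho_oL_le.
by rewrite sizeQ ltnn.
Qed.

End Exchange.

(** Far branches: choosing, for each vertex of the shell, the end of a walk of
    length 6 through it yields the open packing required by [exchange]. *)
Section FarShell.
Variables (T : finType) (e : rel T).
Hypotheses (e_sym : symmetric e) (e_irr : irreflexive e) (girth : girth_at_least e 15).

Definition far_branch (x c r : T) : Prop :=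
  exists w1 w2 w3 q, nbwalk e x [:: w1; w2; w3; c; q; r].

Lemma far_branch_share x c r : far_branch x c r -> share_nbr e r c.
Proof.
case=> w1 [w2 [w3 [q /andP[/= Hp Hn]]]].
move: Hp Hn => /and5P[_ _ _ _ /and3P[Hcq Hqr _]] /and5P[_ _ _ _ /andP[Hcr _]].
by apply: (share_nbr_of (w := q)); rewrite // 1?eq_sym // e_sym.
Qed.

Lemma far_shell_exchange x y z :
  in_U e -> share_nbr e x y -> share_nbr e x z -> y != z -> ~~ share_nbr e y z ->
  {in shell e x y z, forall c, exists r, far_branch x c r} -> False.
Proof.
move=> HU Hxy Hxz Hyz Nyz Hbranch.
have [f Hf] : exists f : T -> T, forall c, c \in shell e x y z -> far_branch x c (f c).
  apply: (@fin_all_exists _ (fun=> T) (fun c r => c \in shell e x y z -> far_branch x c r)).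
  move=> c; have [/Hbranch [r Hr] | _] := boolP (c \in shell e x y z); last by exists c.
  by exists r.
apply: (@exchange _ e (f @: shell e x y z) x y z) => //.
- apply/open_packingP => _ _ /imsetP[c Hc ->] /imsetP[c' Hc' ->].
  apply/negP => /share_nbrP [Hff [b [Hb Hb']]].
  have [w1 [w2 [w3 [q Hw]]]] := Hf c Hc; have [w1' [w2' [w3' [q' Hw']]]] := Hf c' Hc'.
  have := nbwalk_common_nbr e_sym e_irr girth
    (p := [:: w1; w2; w3; c]) (p' := [:: w1'; w2'; w3'; c']) Hw Hw' erefl erefl Hb Hb'.
  by case/(_ Hff) => _ _ _ Ecc; rewrite Ecc eqxx in Hff.
- move=> _ /imsetP[c Hc ->]; have [w1 [w2 [w3 [q Hw]]]] := Hf c Hc.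
  exact: (nbwalk_apart_root e_sym e_irr girth Hw).
- by move=> c Hc; exists (f c); [exact: imset_f | exact/far_branch_share/Hf].
Qed.

End FarShell.

Section Supports.
Variables (T : finType) (e : rel T).
Hypothesis e_sym : symmetric e.

Lemma leaf_nbr x a b : leaf e x -> e x a -> e x b -> a = b.
Proof.
rewrite /leaf /deg => /cards1P [w Hw] Ha Hb.
have : a \in nbhd e x by rewrite inE.
have : b \in nbhd e x by rewrite inE.
by rewrite Hw !inE => /eqP -> /eqP ->.
Qed.

Lemma other_nbr x w : ~~ leaf e x -> e x w -> exists2 y, e x y & y != w.
Proof.
move=> Hx Hw; have : 0 < #|nbhd e x :\ w|.
  have : w \in nbhd e x by rewrite inE.
  by move: Hx; rewrite /leaf /deg (cardsD1 w) => /[swap] ->; case: #|_|.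
by case/card_gt0P => y; rewrite !inE => /andP[Hyw Hy]; exists y.
Qed.

Lemma supportP s : reflect (exists2 l, e s l & leaf e l) (Defs.support e s).
Proof. by apply: (iffP existsP) => [[l /andP[]] | [l H1 H2]]; exists l; rewrite ?H1. Qed.

Lemma single_star_nbr s t : single_star_support e s -> e s t -> ~~ Defs.support e t.
Proof. by case/andP => _ /forallP /(_ t) /implyP. Qed.

Lemma not_single_star s :
  Defs.support e s -> ~~ single_star_support e s -> exists2 t, e s t & Defs.support e t.
Proof.
rewrite /single_star_support => -> /= /forallPn [t].
by rewrite negb_imply negbK => /andP[]; exists t.
Qed.

Lemma branch_beyond w c : e w c -> ~~ Defs.support e w -> ~~ single_star_support e c ->
  exists q r, [/\ e c q, q != w, e q r & r != c].
Proof.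
move=> Hwc Nw Nc; have Hcw : e c w by rewrite e_sym.
have Lc : ~~ leaf e c by apply: contra Nw => Lc; apply/supportP; exists c.
suff [q Hcq [Hqw Lq]] : exists2 q, e c q & q != w /\ ~~ leaf e q.
  have Hqc : e q c by rewrite e_sym.
  by have [r Hqr Hrc] := other_nbr Lq Hqc; exists q, r.
have [Sc | Nsc] := boolP (Defs.support e c).
  have [t Hct St] := not_single_star Sc Nc.
  exists t => //; split; first by apply: contraNneq Nw => <-.
  apply: contra Lc => Lt; have /supportP [l Htl Ll] := St.
  have Htc : e t c by rewrite e_sym.
  by rewrite (leaf_nbr Lt Htc Htl).
have [y Hcy Hyw] := other_nbr Lc Hcw.
by exists y => //; split => //; apply: contra Nsc => Ly; apply/supportP; exists y.
Qed.

(* In a graph of class U, distinct support vertices share no neighbour: otherwise their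
   common neighbour [w] could be exchanged for two of their leaves. *)
Lemma supports_share_nbr s1 s2 :
  in_U e -> Defs.support e s1 -> Defs.support e s2 -> ~~ share_nbr e s1 s2.
Proof.
move=> HU /supportP [l1 H1 L1] /supportP [l2 H2 L2].
apply/negP => /share_nbrP [Hs [w [Hw1 Hw2]]].
have El1 a : e l1 a -> a = s1 by move=> Ha; apply: leaf_nbr L1 Ha _; rewrite e_sym.
have El2 a : e l2 a -> a = s2 by move=> Ha; apply: leaf_nbr L2 Ha _; rewrite e_sym.
apply: (@exchange _ e set0 w l1 l2) => //.
- by apply/open_packingP => ?; rewrite inE.
- by move=> ?; rewrite inE.
- apply: (share_nbr_of (w := s1)); rewrite 1?e_sym //.
  by apply: contraNneq Hs => Ew; apply/eqP; rewrite -(El1 s2) // -Ew e_sym.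
- apply: (share_nbr_of (w := s2)); rewrite 1?e_sym //.
  by apply: contraNneq Hs => Ew; apply/eqP; rewrite (El2 s1) // -Ew e_sym.
- by apply: contraNneq Hs => El; apply/eqP; rewrite -(El1 s2) // El e_sym.
- by apply/share_nbrP => -[_ [m [/El1 -> /El2]]]; apply/eqP.
- move=> c; rewrite inE => /andP[Hshare /andP[Hwc /negP[]]].
  case/orP: Hshare => /share_nbrP [_ [m [Hm Hcm]]].
    by rewrite (El1 m Hm) in Hcm; apply: (share_nbr_of (w := s1)); rewrite // e_sym.
  by rewrite (El2 m Hm) in Hcm; apply: (share_nbr_of (w := s2)); rewrite // e_sym.
Qed.

End Supports.

Section SingleStars.
Variables (T : finType) (e : rel T).
Hypotheses (e_sym : symmetric e) (e_irr : irreflexive e) (girth : girth_at_least e 15).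
Hypothesis HU : in_U e.

(* As there are no triangles, the vertices at distance 2 from [v] are exactly
   those sharing a neighbour with [v]. *)
Lemma dist_is_two v s : dist_is e v s 2 <-> share_nbr e v s.
Proof.
split.
  case=> -[p /and3P[Hp /eqP Hl /eqP Hs]] Hmin.
  case: p Hp Hl Hs => [|a [|b [|? ?]]] //= /andP[Hva /andP[Hab _]] Eb _; subst b.
  apply: (share_nbr_of (w := a)); rewrite // 1?e_sym //.
  by apply/eqP => Ev; apply: (Hmin 0) => //; exists [::]; rewrite /= Ev eqxx.
move=> Dvs; have Nvs := share_nbr_nonadj e_sym e_irr girth Dvs.
case/share_nbrP: Dvs => Hvs [w [Hvw Hsw]]; split.
  by exists [:: w; s]; rewrite /= Hvw e_sym Hsw eqxx.
case=> [|[|//]] _ [p /and3P[Hp /eqP Hl /eqP Hs]]; case: p Hp Hl Hs => [|y [|? ?]] //=.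
  by move=> _ Ev; rewrite Ev eqxx in Hvs.
by move=> /andP[Hvy _] Ey; rewrite -Ey Hvy in Nvs.
Qed.

Lemma single_star_branch v u s c :
  e v u -> e u s -> v != s -> single_star_support e s -> share_nbr e s c -> apart e v c ->
  exists r, far_branch e v c r.
Proof.
move=> Hvu Hus Hvs Ss /share_nbrP [Hsc [w [Hsw Hcw]]] /andP[Hvc Nvc].
have Hwu : w != u.
  by apply: contraNneq Nvc => Ewu; apply: (share_nbr_of (w := u)); rewrite // -Ewu.
have Nsc : ~~ single_star_support e c.
  apply/negP => /andP[Sc _]; have /andP[Sups _] := Ss.
  by have := supports_share_nbr e_sym HU Sups Sc; rewrite (share_nbr_of Hsc Hsw Hcw).
have Hwc : e w c by rewrite e_sym.
have [q [r [Hcq Hqw Hqr Hrc]]] := branch_beyond e_sym Hwc (single_star_nbr Ss Hsw) Nsc.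
exists r, u, s, w, q.
rewrite /nbwalk /= Hvu Hus Hsw Hwc Hcq Hqr.
by rewrite Hvs (eq_sym u) Hwu Hsc (eq_sym w) Hqw (eq_sym c) Hrc.
Qed.

(* Two single star supports at distance 2 from [v] coincide: otherwise [v] could be
   exchanged for them, every vertex of the shell starting a far branch from [v]. *)
Lemma single_star_unique v s1 s2 : single_star_support e s1 -> single_star_support e s2 ->
  share_nbr e v s1 -> share_nbr e v s2 -> s1 = s2.
Proof.
move=> S1 S2 D1 D2; apply/eqP/negPn/negP => Hs.
have [/andP[Sup1 _] /andP[Sup2 _]] := (S1, S2).
have /share_nbrP [Hv1 [u1 [Hvu1 Hsu1]]] := D1; have /share_nbrP [Hv2 [u2 [Hvu2 Hsu2]]] := D2.
apply: (far_shell_exchange e_sym e_irr girth HU D1 D2 Hs); first exact: supports_share_nbr.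
move=> c; rewrite inE => /andP[/orP[] Hsc Hvc].
  by apply: (single_star_branch Hvu1 _ Hv1 S1); rewrite // e_sym.
by apply: (single_star_branch Hvu2 _ Hv2 S2); rewrite // e_sym.
Qed.

Lemma no_single_star_branch v u s t m c :
  (forall w, e v w -> ~~ Defs.support e w) ->
  (forall c, share_nbr e v c -> ~~ single_star_support e c) ->
  e v u -> e u s -> v != s -> e s t -> e t m -> leaf e m ->
  c \in shell e s m v -> exists r, far_branch e s c r.
Proof.
move=> Nv Nsingle Hvu Hus Hvs Hst Htm Lm.
rewrite inE => /andP[Hshare /andP[Hsc Nsc]].
case/orP: Hshare => /share_nbrP [Hc [w [Hw Hcw]]].
  have Ewt : w = t by apply: leaf_nbr Lm Hw _; rewrite e_sym.
  by rewrite Ewt in Hcw; rewrite (share_nbr_of Hsc Hst Hcw) in Nsc.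
have Hwu : w != u.
  apply: contraNneq Nsc => Ewu; rewrite Ewu in Hcw.
  by apply: (share_nbr_of Hsc _ Hcw); rewrite e_sym.
have Hwc : e w c by rewrite e_sym.
have Nsc' := Nsingle c (share_nbr_of Hc Hw Hcw).
have [q [r [Hcq Hqw Hqr Hrc]]] := branch_beyond e_sym Hwc (Nv w Hw) Nsc'.
exists r, u, v, w, q; rewrite /nbwalk /= e_sym Hus e_sym Hvu Hw Hwc Hcq Hqr.
by rewrite eq_sym Hvs eq_sym Hwu Hc eq_sym Hqw eq_sym Hrc.
Qed.

(* If the neighbours of [v] are not supports, a support vertex sharing a neighbour
   with [v] forces a single star support sharing a neighbour with [v]: otherwise
   [s] could be exchanged for [v] and a leaf [m] of a support neighbour of [s]. *)
Lemma single_star_exists v s : (forall w, e v w -> ~~ Defs.support e w) ->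
  Defs.support e s -> share_nbr e v s -> exists2 s', single_star_support e s' & share_nbr e v s'.
Proof.
move=> Nv Ss Ds.
have [/existsP [s' /andP[S' D']] | Nex] :=
  boolP [exists s', single_star_support e s' && share_nbr e v s']; first by exists s'.
have Nsingle c : share_nbr e v c -> ~~ single_star_support e c.
  by move=> Dc; apply: contra Nex => Sc; apply/existsP; exists c; rewrite Sc.
exfalso; have /share_nbrP [Hvs [u [Hvu Hsu]]] := Ds.
have [t Hst St] := not_single_star Ss (Nsingle s Ds).
have /supportP [m Htm Lm] := St.
have Nvt : ~~ e v t by apply: contraL St => /Nv.
have Emt a : e m a -> a = t by move=> Hma; apply: leaf_nbr Lm Hma _; rewrite e_sym.
have Hmt : e m t by rewrite e_sym.
have Hus : e u s by rewrite e_sym.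
apply: (far_shell_exchange e_sym e_irr girth HU (x := s) (y := m) (z := v)).
- apply: (share_nbr_of _ Hst Hmt); apply: contraNneq Nvt => Esm.
  by rewrite -(Emt u) // -Esm e_sym.
- by apply: (share_nbr_of _ Hsu Hvu); rewrite eq_sym.
- by apply: contraNneq Nvt => <-.
- by apply/negP => /share_nbrP [_ [p [/Emt -> Hvt]]]; rewrite Hvt in Nvt.
- by move=> c; apply: (no_single_star_branch Nv Nsingle Hvu Hus Hvs Hst Htm Lm).
Qed.

End SingleStars.

Theorem lemma6 (T : finType) (e : rel T) (e_sym : symmetric e) (e_irr : irreflexive e) :
  connected_graph e -> min_deg_one e -> girth_at_least e 15 -> in_U e ->
  forall v : T, dist_to_supports_is e v 2 ->
  exists! s : T, single_star_support e s /\ dist_is e v s 2.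
Proof.
move=> _ _ girth HU v [[s0 [Ss0 /(dist_is_two e_sym e_irr girth) Ds0]] Hnear].
have Nv w : e v w -> ~~ Defs.support e w.
  move=> Hvw; apply/negP => Sw; apply: (Hnear w Sw 1) => //.
  by exists [:: w]; rewrite /= Hvw eqxx.
have [s Ss Ds] := single_star_exists e_sym e_irr girth HU Nv Ss0 Ds0.
exists s; split; first by split; last exact/(dist_is_two e_sym e_irr girth).
move=> s' [Ss' /(dist_is_two e_sym e_irr girth) Ds'].
exact: (single_star_unique e_sym e_irr girth HU Ss Ss' Ds Ds').
Qed.
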